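(* Let $0\le n\le r$ and let $\mathscr I=[I_0,\dots,I_n]$ be a proper ideal of $\Omega_{H_n}$. Then $\mathscr I$ is prime if and only if for each $0\le k\le n$ the following condition $\mathcal P(k)$ holds: for every $0\le i\le k$, every $a\in L_k(I_{k-1})$ and every $b\in L_i(I_{i-1})\setminus I_i$, $$a\cdot\mathrm{jnd}^k_i(b)\in I_k\ \Longrightarrow\ a\in I_k,$$ where $L_j(I_{j-1})=(\mathrm{res}^j_{j-1})^{-1}(I_{j-1})$ for $j\ge1$ and $L_0(I_{-1}):=R_0$. (In particular $\mathcal P(0)$ says that $I_0$ is a prime ideal of the ring $R_0\cong\mathbb{Z}$.)
   Context: Fix a prime $p$ and an integer $r\ge0$. For $0\le k\le r$ let $R_k$ be the commutative ring which is free as a $\mathbb{Z}$-module with basis $X_{k,0},\dots,X_{k,k}$ and multiplication $X_{k,i}X_{k,j}=p^{k-\max(i,j)}X_{k,\min(i,j)}$; thus $X_{k,k}=1$, and an integer $n$ is identified with $nX_{k,k}$. For $0\le k\le\ell\le r$ define: the additive map $\mathrm{ind}^\ell_k:R_k\to R_\ell$, $X_{k,i}\mapsto X_{\ell,i}$; the ring homomorphism $\mathrm{res}^\ell_k:R_\ell\to R_k$, $\mathrm{res}^\ell_k(X_{\ell,i})=p^{\ell-k}X_{k,i}$ if $i\le k$ and $=p^{\ell-i}$ if $i\ge k$; and the multiplicative map $\mathrm{jnd}^\ell_k:R_k\to R_\ell$, $$\mathrm{jnd}^\ell_k\Big(\sum_{i=0}^k m_iX_{k,i}\Big)=m_kX_{\ell,\ell}+\sum_{k\le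 i<\ell}\frac{m_k^{p^{\ell-i}}-m_k^{p^{\ell-i-1}}}{p^{\ell-i}}X_{\ell,i}+\sum_{0\le i<k}\frac{(\sum_{s=i}^k m_sp^{k-s})^{p^{\ell-k}}-(\sum_{s=i+1}^k m_sp^{k-s})^{p^{\ell-k}}}{p^{\ell-i}}X_{\ell,i}$$ ($m_i\in\mathbb{Z}$). For $k=\ell$ these maps are the identity. These data form the Burnside Tambara functor on $\mathbb{Z}/p^r\mathbb{Z}$; keeping indices $\le n$ gives $\Omega_{H_n}$. An ideal of $\Omega_{H_n}$ is a sequence $[I_0,\dots,I_n]$ of ideals $I_k\subseteq R_k$ such that for every $1\le k\le n$: $\mathrm{ind}^k_{k-1}(I_{k-1})\subseteq I_k$, $\mathrm{res}^k_{k-1}(I_k)\subseteq I_{k-1}$, $\mathrm{jnd}^k_{k-1}(I_{k-1})\subseteq I_k$. It is proper if $I_0\ne R_0$. A proper ideal is prime if for all $0\le\ell\le k\le n$, $a\in R_k$, $b\in R_\ell$: whenever $(\mathrm{jnd}^m_i\mathrm{res}^k_i(a))\cdot(\mathrm{jnd}^m_j\mathrm{res}^\ell_j(b))\in I_m$ for all $0\le i\le k$, $0\le j\le\ell$, $m=\max(i,j)$, then $a\in I_k$ or $b\in I_\ell$. *)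

From HB Require Import structures.
From mathcomp Require Import all_boot all_order all_algebra.
Set Implicit Arguments. Unset Strict Implicit. Unset Printing Implicit Defensive.
Import Order.TTheory GRing.Theory Num.Theory.
Local Open Scope ring_scope.

(* An element sum_i m_i X_{k,i} of R_k is stored as its coefficient vector
   (m_0, ..., m_k). *)
Definition elt (k : nat) := {ffun 'I_k.+1 -> int}.

Definition zero_elt (k : nat) : elt k := [ffun => 0].
Definition one_elt (k : nat) : elt k := [ffun i : 'I_k.+1 => if val i == k then 1 else 0].
Definition add_elt (k : nat) (a b : elt k) : elt k := [ffun i => a i + b i].
Definition opp_elt (k : nat) (a : elt k) : elt k := [ffun i => - a i].

(* X_{k,i} X_{k,j} = p^(k - max(i,j)) X_{k,min(i,j)} *)
Definition mul_elt (p k : nat) (a b : elt k) : elt k :=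
  [ffun m : 'I_k.+1 => \sum_(i < k.+1) \sum_(j < k.+1)
     (if minn i j == val m then a i * b j * (p ^ (k - maxn i j))%:Z else 0)].

(* ind^l_k : X_{k,i} |-> X_{l,i}  (used for k <= l) *)
Definition ind (k l : nat) (a : elt k) : elt l :=
  [ffun j : 'I_l.+1 => if (val j <= k)%N then a (inord j) else 0].

Definition res (p l k : nat) (a : elt l) : elt k :=
  [ffun j : 'I_k.+1 =>
     if (val j < k)%N then (p ^ (l - k))%:Z * a (inord j)
     else \sum_(i < l.+1 | (k <= i)%N) (p ^ (l - i))%:Z * a i].

Definition psum (p k : nat) (a : elt k) (i : nat) : int :=
  \sum_(s < k.+1 | (i <= s)%N) a s * (p ^ (k - s))%:Z.
Arguments psum : clear implicits.

(* jnd^l_k : R_k -> R_l  (used for k <= l); the divisions are exact *)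
Definition jnd (p k l : nat) (a : elt k) : elt l :=
  [ffun i : 'I_l.+1 =>
     let mk := a ord_max in
     if val i == l then mk
     else if (k <= i)%N then
       divz (mk ^+ (p ^ (l - i)) - mk ^+ (p ^ (l - i - 1))) (p ^ (l - i))%:Z
     else
       divz (psum p k a i ^+ (p ^ (l - k)) - psum p k a i.+1 ^+ (p ^ (l - k)))
            (p ^ (l - i))%:Z].

Arguments zero_elt : clear implicits.
Arguments one_elt : clear implicits.
Arguments add_elt : clear implicits.
Arguments opp_elt : clear implicits.
Arguments mul_elt : clear implicits.
Arguments ind : clear implicits.
Arguments res : clear implicits.
Arguments psum : clear implicits.
Arguments jnd : clear implicits.

Definition ring_ideal (p k : nat) (J : elt k -> Prop) : Prop :=
  [/\ J (zero_elt k),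
      (forall x y, J x -> J y -> J (add_elt k x y)),
      (forall x, J x -> J (opp_elt k x)) &
      (forall r x, J x -> J (mul_elt p k r x))].

(* A family I (only I 0, ..., I n matter) is an ideal of Omega_{H_n}. *)
Definition tambara_ideal (p n : nat) (I : forall k : nat, elt k -> Prop) : Prop :=
  (forall k, (k <= n)%N -> ring_ideal p (I k)) /\
  (forall k, (k < n)%N ->
     (forall x, I k x -> I k.+1 (ind k k.+1 x)) /\
     (forall x, I k.+1 x -> I k (res p k.+1 k x)) /\
     (forall x, I k x -> I k.+1 (jnd p k k.+1 x))).

Definition tambara_proper (I : forall k : nat, elt k -> Prop) : Prop :=
  ~ (forall x : elt 0, I 0%N x).

Definition tambara_prime (p n : nat) (I : forall k : nat, elt k -> Prop) : Prop :=
  tambara_proper I /\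
  forall (l k : nat), (l <= k)%N -> (k <= n)%N ->
  forall (a : elt k) (b : elt l),
    (forall i j : nat, (i <= k)%N -> (j <= l)%N ->
       I (maxn i j) (mul_elt p (maxn i j) (jnd p i (maxn i j) (res p k i a))
                               (jnd p j (maxn i j) (res p l j b)))) ->
    I k a \/ I l b.

Definition Lset (p : nat) (I : forall k : nat, elt k -> Prop) (j : nat) : elt j -> Prop :=
  match j with
  | 0%N => fun _ => True
  | j'.+1 => fun x => I j' (res p j'.+1 j' x)
  end.
Arguments Lset : clear implicits.

Definition condP (p : nat) (I : forall k : nat, elt k -> Prop) (k : nat) : Prop :=
  forall i : nat, (i <= k)%N ->
  forall (a : elt k) (b : elt i),
    Lset p I k a -> Lset p I i b -> ~ I i b ->
    I k (mul_elt p k a (jnd p i k b)) -> I k a.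

Arguments Lset : clear implicits.
Arguments condP : clear implicits.

From HB Require Import structures.
From mathcomp Require Import all_boot all_order all_algebra finfield.
From mathcomp Require Import zify.
From Stdlib Require Import Classical.
Set Implicit Arguments. Unset Strict Implicit. Unset Printing Implicit Defensive.
Import Order.TTheory GRing.Theory Num.Theory.
Local Open Scope ring_scope.

(* The key device is the family of "partial-sum coordinates"
   S_t(a) = sum_{s >= t} a_s p^(k-s) of an element a of R_k: they determine a,
   restriction leaves them unchanged, and jnd^l_k raises them to a p-power
   (S_t(jnd a) = S_{min t k}(a)^(p^(l - max t k))).  The latter needs that the
   divisions in the definition of jnd are exact, which follows from Fermat's
   little theorem and the lifting congruence x = y [p^e] => x^p = y^p [p^(e+1)].  The two directions of the theorem
   are then proved separately: a prime ideal satisfies every P(k) by testing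
   primality on the pair (a, b), and conversely, if a, b lie outside the ideal
   we restrict them to the lowest levels where they leave it, and P at the
   higher of these levels yields a contradiction. *)

Section PrimePowerCongruences.

Variable p : nat.
Hypothesis p_prime : prime p.

Lemma dvdz_p_Fp (z : int) : (p%:Z %| z)%Z = (z%:~R == 0 :> 'F_p).
Proof. exact: (dvdz_pcharf (pchar_Fp p_prime)). Qed.

Lemma fermatz (m : int) : (p%:Z %| m ^+ p - m)%Z.
Proof.
rewrite dvdz_p_Fp rmorphB rmorphXn /=.
by have := expf_card (m%:~R : 'F_p); rewrite card_Fp // => ->; rewrite subrr.
Qed.

(* Lifting: a congruence mod p^e (e > 0) becomes one mod p^(e+1) after
   raising to the p-th power, since x^p - y^p = (x - y) * sum x^i y^(p-1-i)
   and the second factor is p * y^(p-1) = 0 mod p. *)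
Lemma dvdz_lift_expp (x y : int) e : (0 < e)%N ->
  ((p ^ e)%:Z %| x - y)%Z -> ((p ^ e.+1)%:Z %| x ^+ p - y ^+ p)%Z.
Proof.
move=> e_gt0 dvd_xy; rewrite subrXX expnSr PoszM; apply: dvdz_mul => //.
have /eqP x_eq_y : (x%:~R : 'F_p) == y%:~R.
  rewrite -subr_eq0 -rmorphB -dvdz_p_Fp; apply: dvdz_trans dvd_xy.
  by rewrite -(subnKC e_gt0) expnS PoszM; exact: dvdz_mulr.
rewrite dvdz_p_Fp rmorph_sum /=.
rewrite (eq_bigr (fun _ => (y%:~R : 'F_p) ^+ p.-1)); last first.
  move=> i _; rewrite rmorphM !rmorphXn /= x_eq_y -exprD; congr (_ ^+ _).
  by have := ltn_ord i; lia.
by rewrite sumr_const card_ord -mulr_natl (pcharf0 (pchar_Fp p_prime)) mul0r.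
Qed.

Lemma dvdz_lift_exppn (x y : int) e f : (0 < e)%N ->
  ((p ^ e)%:Z %| x - y)%Z -> ((p ^ (e + f))%:Z %| x ^+ (p ^ f) - y ^+ (p ^ f))%Z.
Proof.
move=> e_gt0 dvd_xy; elim: f => [|f IHf]; first by rewrite addn0 expn0 !expr1.
by rewrite addnS expnSr !exprM; apply: dvdz_lift_expp => //; lia.
Qed.

(* m^(p^(f+1)) = m^(p^f) mod p^(f+1): the exactness of the divisions in the
   "top" coefficients of jnd. *)
Lemma fermat_iterated (m : int) f :
  ((p ^ f.+1)%:Z %| m ^+ (p ^ f.+1) - m ^+ (p ^ f))%Z.
Proof.
have := @dvdz_lift_exppn (m ^+ p) m 1 f isT.
by rewrite expn1 -exprM -expnS add1n; apply; apply: fermatz.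
Qed.

End PrimePowerCongruences.

Section PartialSumCoordinates.

Variable p : nat.

Lemma psum_gt (k : nat) (a : elt k) t : (k < t)%N -> psum p k a t = 0.
Proof.
move=> lt_kt; rewrite /psum big_pred0 // => s.
by apply/negbTE; rewrite -ltnNge; exact: leq_ltn_trans (leq_ord s) lt_kt.
Qed.

Lemma psum_rec (k : nat) (a : elt k) t : (t <= k)%N ->
  psum p k a t = a (inord t) * (p ^ (k - t))%:Z + psum p k a t.+1.
Proof.
move=> le_tk; rewrite /psum (bigD1 (inord t)) /=; last by rewrite inordK.
rewrite inordK //; congr (_ + _); apply: eq_bigl => s.
rewrite -(inj_eq val_inj) /= inordK //.
by case: (ltngtP t s) => //= ->; rewrite eqxx.
Qed.

Lemma inord_max k : inord k = ord_max :> 'I_k.+1.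
Proof. by apply: val_inj; rewrite /= inordK. Qed.

Lemma psum_top (k : nat) (a : elt k) : psum p k a k = a ord_max.
Proof. by rewrite psum_rec // psum_gt // subnn expn0 mulr1 addr0 inord_max. Qed.

Lemma elt_eq_psum (k : nat) (a b : elt k) : (0 < p)%N ->
  (forall t, (t <= k)%N -> psum p k a t = psum p k b t) -> a = b.
Proof.
move=> p_gt0 eq_ab.
have {}eq_ab t : psum p k a t = psum p k b t.
  by case: (leqP t k) => [/eq_ab //|lt_kt]; rewrite !psum_gt.
apply/ffunP => s; have := eq_ab s.
rewrite (@psum_rec k a s) ?leq_ord // (@psum_rec k b s) ?leq_ord // eq_ab.
move/addIr; rewrite inord_val; apply: mulIf.
by rewrite eqz_nat -lt0n expn_gt0 p_gt0.
Qed.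

Lemma psum_res (l k : nat) (a : elt l) t : (k <= l)%N -> (t <= k)%N ->
  psum p k (res p l k a) t = psum p l a t.
Proof.
move=> le_kl; move: {2}(k - t)%N (erefl (k - t)%N) => d.
elim: d t => [|d IHd] t def_d le_tk.
  have -> : t = k by lia.
  by rewrite psum_top /psum ffunE /= ltnn; apply: eq_bigr => i _; exact: mulrC.
rewrite psum_rec // (@psum_rec l a t) ?(leq_trans le_tk) // IHd; [|lia|lia].
congr (_ + _); rewrite ffunE /= !inordK; try lia.
have -> : (t < k)%N by lia.
rewrite mulrC mulrA -PoszM -expnD mulrC.
by have -> : (k - t + (l - k) = l - t)%N by lia.
Qed.

Lemma psum_jnd (k l : nat) (a : elt k) t : prime p -> (k <= l)%N -> (t <= l)%N ->
  psum p l (jnd p k l a) t = psum p k a (minn t k) ^+ (p ^ (l - maxn t k)).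
Proof.
move=> p_prime le_kl; move: {2}(l - t)%N (erefl (l - t)%N) => d.
elim: d t => [|d IHd] t def_d le_tl.
  have -> : t = l by lia.
  rewrite psum_top ffunE /= eqxx (minn_idPr le_kl) (maxn_idPl le_kl).
  by rewrite subnn expn0 expr1 psum_top.
rewrite psum_rec // IHd; [|lia|lia].
rewrite ffunE /= inordK; last lia.
have -> : (t == l) = false by apply/eqP; lia.
case: (leqP k t) => [le_kt|lt_tk].
  rewrite (minn_idPr (leq_trans le_kt (leqnSn t))).
  rewrite (maxn_idPl (leq_trans le_kt (leqnSn t))) psum_top.
  have -> : (l - t - 1 = l - t.+1)%N by lia.
  rewrite divzK ?subrK //.
  have -> : (l - t = (l - t.+1).+1)%N by lia.
  exact: fermat_iterated.
rewrite (minn_idPl lt_tk) (maxn_idPr lt_tk) divzK ?subrK //.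
have -> : (l - t = (k - t) + (l - k))%N by lia.
apply: dvdz_lift_exppn => //; first lia.
by rewrite psum_rec ?(ltnW lt_tk) // addrK; exact: dvdz_mull.
Qed.

End PartialSumCoordinates.

Section RestrictionAndNorm.

Variable p : nat.
Hypothesis p_prime : prime p.

(* res^k_j o res^l_k = res^l_j and res^k_k = id: compare coordinates. *)
Lemma res_trans (j k l : nat) (a : elt l) : (j <= k)%N -> (k <= l)%N ->
  res p k j (res p l k a) = res p l j a.
Proof.
move=> le_jk le_kl; apply: (elt_eq_psum (prime_gt0 p_prime)) => t le_tj.
by rewrite !psum_res //; [exact: leq_trans le_kl | exact: leq_trans le_jk].
Qed.

Lemma res_id (k : nat) (a : elt k) : res p k k a = a.
Proof. by apply: (elt_eq_psum (prime_gt0 p_prime)) => t le_tk; exact: psum_res. Qed.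

(* jnd^k_l o jnd^j_k = jnd^j_l and jnd^k_k = id: the exponents p^(...) add up. *)
Lemma jnd_trans (j k l : nat) (a : elt j) : (j <= k)%N -> (k <= l)%N ->
  jnd p k l (jnd p j k a) = jnd p j l a.
Proof.
move=> le_jk le_kl; apply: (elt_eq_psum (prime_gt0 p_prime)) => t le_tl.
rewrite !psum_jnd //; [|exact: leq_trans le_kl|exact: geq_minr].
rewrite -exprM -expnD -minnA (minn_idPr le_jk).
by have -> : (k - maxn (minn t k) j + (l - maxn t k) = l - maxn t j)%N by lia.
Qed.

Lemma jnd_id (k : nat) (a : elt k) : jnd p k k a = a.
Proof.
apply: (elt_eq_psum (prime_gt0 p_prime)) => t le_tk.
by rewrite psum_jnd // (minn_idPl le_tk) (maxn_idPr le_tk) subnn expn0 expr1.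
Qed.

End RestrictionAndNorm.

Lemma mul_eltC (p k : nat) (a b : elt k) : mul_elt p k a b = mul_elt p k b a.
Proof.
apply/ffunP => m; rewrite !ffunE exchange_big; apply: eq_bigr => i _.
by apply: eq_bigr => j _; rewrite minnC maxnC (mulrC (a j)).
Qed.

Section IdealClosure.

Variables (p n : nat) (I : forall k : nat, elt k -> Prop).
Arguments I : clear implicits.
Hypothesis p_prime : prime p.
Hypothesis I_ideal : tambara_ideal p n I.

Lemma ideal_mulr m : (m <= n)%N -> forall x y, I m y -> I m (mul_elt p m x y).
Proof. by move=> le_mn x y Iy; case: (proj1 I_ideal m le_mn) => _ _ _; apply. Qed.

Lemma ideal_mull m : (m <= n)%N -> forall x y, I m x -> I m (mul_elt p m x y).
Proof. by move=> le_mn x y Ix; rewrite mul_eltC; apply: ideal_mulr. Qed.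

Lemma ideal_res u v : (v <= u)%N -> (u <= n)%N ->
  forall x, I u x -> I v (res p u v x).
Proof.
elim: u v => [|u IHu] v le_vu le_un x Ix.
  by move: le_vu; rewrite leqn0 => /eqP ->; rewrite res_id.
case: (ltngtP v u.+1) => [lt_vu|lt_uv|->]; [|lia|by rewrite res_id].
rewrite -(@res_trans p p_prime v u u.+1) //; apply: IHu => //; first lia.
exact: (proj1 (proj2 (proj2 I_ideal u le_un))).
Qed.

Lemma ideal_jnd u v : (v <= u)%N -> (u <= n)%N ->
  forall x, I v x -> I u (jnd p v u x).
Proof.
elim: u v => [|u IHu] v le_vu le_un x Ix.
  by move: le_vu; rewrite leqn0 => /eqP def_v; subst v; rewrite jnd_id.
case: (ltngtP v u.+1) => [lt_vu|lt_uv|def_v]; [|lia|by subst v; rewrite jnd_id].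
rewrite -(@jnd_trans p p_prime v u u.+1) //.
by apply: (proj2 (proj2 (proj2 I_ideal u le_un))); apply: IHu => //; lia.
Qed.

Lemma Lset_res u (x : elt u) : (u <= n)%N -> Lset p I u x ->
  forall v, (v < u)%N -> I v (res p u v x).
Proof.
case: u x => [//|u] x le_un /= Lx v lt_vu.
have le_vu : (v <= u)%N by lia.
by rewrite -(@res_trans p p_prime v u u.+1) //; apply: ideal_res => //; lia.
Qed.

(* An element outside I_u has a restriction to some level i <= u lying
   outside I_i but inside L_i(I_{i-1}): take the lowest such level. *)
Lemma lowest_nonmember_level u (x : elt u) : ~ I u x ->
  exists i, [/\ (i <= u)%N, ~ I i (res p u i x) & Lset p I i (res p u i x)].
Proof.
elim: u x => [|u IHu] x notIx; first by exists 0%N; rewrite res_id.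
have [Ires|notIres] := classic (I u (res p u.+1 u x)).
  by exists u.+1; rewrite res_id.
have [i [le_iu notIi Li]] := IHu _ notIres.
exists i; rewrite -(@res_trans p p_prime i u u.+1) //; split => //; lia.
Qed.

(* A prime ideal satisfies P(k): test primality on the pair (a, b); all
   mixed products other than a * jnd(b) lie in the ideal because a and b
   restrict into it below their own levels. *)
Lemma prime_condP : tambara_prime p n I -> forall k, (k <= n)%N -> condP p I k.
Proof.
move=> [_ I_prime] k le_kn i le_ik a b La Lb notIb Iab.
suff [//|//] : I k a \/ I i b.
apply: I_prime => // i' j le_i'k le_ji.
have le_max_n : (maxn i' j <= n)%N by rewrite geq_max; lia.
have [lt_i'k|->] : (i' < k)%N \/ i' = k by lia.
  apply: ideal_mull => //; apply: ideal_jnd => //; first exact: leq_maxl.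
  exact: Lset_res.
rewrite (maxn_idPl (leq_trans le_ji le_ik)) res_id // jnd_id //.
have [lt_ji|->] : (j < i)%N \/ j = i by lia.
  apply: ideal_mulr => //; apply: ideal_jnd => //; first lia.
  by apply: Lset_res => //; lia.
by rewrite res_id.
Qed.

(* Conversely P(0), ..., P(n) make the ideal prime: restrict a and b to the
   lowest levels i and j where they leave the ideal; if j <= i then P(i)
   applied to the (i, j) product forces res a into I_i, and symmetrically. *)
Lemma condP_prime : tambara_proper I ->
  (forall k, (k <= n)%N -> condP p I k) -> tambara_prime p n I.
Proof.
move=> I_proper P_all; split => // l k le_lk le_kn a b Iprod.
have [Ia|notIa] := classic (I k a); first by left.
have [Ib|notIb] := classic (I l b); first by right.
have [i [le_ik notIi Li]] := lowest_nonmember_level notIa.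
have [j [le_jl notIj Lj]] := lowest_nonmember_level notIb.
(* Deciding i < j makes maxn i j reduce to the larger of the two levels. *)
have := Iprod i j le_ik le_jl; case: (leqP j i) => [le_ji|lt_ij].
  rewrite (@jnd_id p p_prime i) => Iij.
  by case: notIi; exact: (P_all i (leq_trans le_ik le_kn) j le_ji _ _ Li Lj notIj).
rewrite (@jnd_id p p_prime j) mul_eltC => Iji.
have le_jn : (j <= n)%N by lia.
by case: notIj; exact: (P_all j le_jn i (ltnW lt_ij) _ _ Lj Li notIi).
Qed.

End IdealClosure.

Theorem proposition4 (p r n : nat) (I : forall k : nat, elt k -> Prop) :
  prime p -> (n <= r)%N -> tambara_ideal p n I -> tambara_proper I ->
  (tambara_prime p n I <-> forall k : nat, (k <= n)%N -> condP p I k).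
Proof.
move=> p_prime _ I_ideal I_proper; split.
- exact: prime_condP.
- exact: condP_prime.
Qed.
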